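(* Let $T$ be a tree rooted at a vertex $v$ such that every vertex $u\in V(T)\setminus\{v\}$ satisfies $d_T(u)\le 2$. Then (a) $v\in\mathcal{A}(T)$ if and only if $|C^2(v)|=0$ and $|C^1(v)|\le 1$; (b) $v\in\mathcal{N}(T)$ if and only if $|C^2(v)|=2$ or $|C^1(v)|+|C^2(v)|\ge 3$.
   Context: All graphs are finite, simple and undirected. A dissociation set of a graph $G$ is a set $F\subseteq V(G)$ such that $G[F]$ has maximum degree at most $1$; a maximum dissociation set is one of maximum cardinality. $\mathcal{A}(G)$ is the set of vertices of $G$ contained in every maximum dissociation set of $G$, and $\mathcal{N}(G)$ is the set of vertices of $G$ contained in no maximum dissociation set of $G$. In a tree $T$ rooted at $v$, $C(v)$ denotes the set of children of $v$, and for a vertex $w$, $T_w$ denotes the subtree induced by $w$ and all its descendants. Under the hypothesis that all non-root vertices have degree at most $2$, for each child $w$ of $v$ the subtree $T_w$ is a path having $w$ as an end vertex. For $i\in\{0,1,2\}$, $C^i(v)$ denotes the set of children $w\in C(v)$ such that the number of vertices of the path $T_w$ is congruent to $i$ modulo $3$. *)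

From mathcomp Require Import all_boot.
Set Implicit Arguments. Unset Strict Implicit. Unset Printing Implicit Defensive.

Definition simple_graph (T : finType) (e : rel T) : Prop :=
  symmetric e /\ irreflexive e.

Definition nbhd (T : finType) (e : rel T) (u : T) : {set T} := [set y | e u y].
Definition deg (T : finType) (e : rel T) (u : T) : nat := #|nbhd e u|.

Definition is_tree (T : finType) (e : rel T) : Prop :=
  simple_graph e /\
  (forall x y : T, connect e x y) /\
  ~ (exists c : seq T, 3 <= size c /\ uniq c /\ cycle e c).

Definition dissociation (T : finType) (e : rel T) (F : {set T}) : Prop :=
  forall x, x \in F -> #|[set y in F | e x y]| <= 1.

Definition max_dissociation (T : finType) (e : rel T) (F : {set T}) : Prop :=
  dissociation e F /\ forall F' : {set T}, dissociation e F' -> #|F'| <= #|F|.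

(* A(G): vertices lying in every maximum dissociation set. *)
Definition in_all_max_diss (T : finType) (e : rel T) (x : T) : Prop :=
  forall F : {set T}, max_dissociation e F -> x \in F.

(* N(G): vertices lying in no maximum dissociation set. *)
Definition in_no_max_diss (T : finType) (e : rel T) (x : T) : Prop :=
  forall F : {set T}, max_dissociation e F -> x \notin F.

Definition children_root (T : finType) (e : rel T) (v : T) : {set T} := nbhd e v.

(* For a child w of the root v, T_w (w and its descendants) is the set of
   vertices reachable from w in T - v. *)
Definition avoid_rel (T : finType) (e : rel T) (v : T) : rel T :=
  [rel x y | [&& e x y, x != v & y != v]].

Definition subtree_root_child (T : finType) (e : rel T) (v w : T) : {set T} :=
  [set u | connect (avoid_rel e v) w u].

Definition Ci (T : finType) (e : rel T) (v : T) (i : nat) : {set T} :=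
  [set w in children_root e v | #|subtree_root_child e v w| %% 3 == i].

From mathcomp Require Import all_boot zify.
Set Implicit Arguments. Unset Strict Implicit. Unset Printing Implicit Defensive.

(* Let T be a tree rooted at v whose other vertices have degree at most 2.
   Deleting v leaves one path ("leg") q_w for each child w of v; the leg starts
   at w, has |T_w| vertices, and vw is the only edge between v and the leg.
   A dissociation set F meets a leg in a 0/1 pattern without three consecutive
   members, hence in at most path_diss l = l - l/3 vertices (l = leg length).
   If v is in F then at most one child of v is in F, and a child in F has its
   successor on the leg outside F.  This gives the upper bounds
     max_without_root = sum_w path_diss l_w                     (v not in F),
     max_with_root    = 1 + sum_w path_diss (l_w - 1) + [C^1(v) <> 0]  (v in F),
   both attained by choosing on each leg the vertices whose position avoids a
   fixed residue mod 3.  As path_diss l - path_diss (l - 1) = [l mod 3 <> 0],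
   max_without_root = sum_w path_diss (l_w - 1) + |C^1(v)| + |C^2(v)|, and
   comparing the two bounds decides whether v is in all or in no maximum
   dissociation set (lemma max_diss_forced). *)

(* The dissociation number of a path on n vertices. *)
Definition path_diss (n : nat) : nat := n - n %/ 3.

Lemma path_diss_rec n : 0 < n ->
  path_diss n = path_diss n.-1 + (n %% 3 == 1) + (n %% 3 == 2).
Proof. rewrite /path_diss; case: eqP; case: eqP; lia. Qed.

Definition no_three_in_row (bs : seq bool) : Prop :=
  forall i, ~~ [&& nth false bs i, nth false bs i.+1 & nth false bs i.+2].

Lemma no_three_in_row_behead b bs : no_three_in_row (b :: bs) -> no_three_in_row bs.
Proof. by move=> h i; exact: (h i.+1). Qed.

Lemma count_no_three bs : no_three_in_row bs -> count id bs <= path_diss (size bs).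
Proof.
have [n] := ubnP (size bs); elim: n bs => [|n IH] [|a [|b [|c r]]] //=;
  rewrite ?ltnS => hs h3; rewrite /path_diss.
- by case: a h3.
- by case: a h3; case: b.
- have := IH r (ltnW (ltnW hs)) (no_three_in_row_behead
    (no_three_in_row_behead (no_three_in_row_behead h3))).
  rewrite /path_diss; have /= := h3 0; clear h3 hs.
  by case: a; case: b; case: c => //= _; lia.
Qed.

Lemma count_no_three_head_out bs : no_three_in_row bs -> ~~ nth false bs 0 ->
  count id bs <= path_diss (size bs).-1.
Proof. by case: bs => [|[] bs] //= /no_three_in_row_behead /count_no_three. Qed.

Lemma count_no_three_head_pair bs : no_three_in_row bs ->
  nth false bs 0 -> ~~ nth false bs 1 ->
  count id bs <= path_diss (size bs).-1 + (size bs %% 3 == 1).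
Proof.
case: bs => [|a [|b bs]] //= h -> // /negbTE -> /=.
have := count_no_three (no_three_in_row_behead (no_three_in_row_behead h)).
rewrite /path_diss; case: eqP; lia.
Qed.

Definition residue_avoid_count (r l : nat) : nat :=
  count (fun i => i %% 3 != r) (iota 0 l).

Lemma residue_avoid_countS r l :
  residue_avoid_count r l.+1 = residue_avoid_count r l + (l %% 3 != r).
Proof. by rewrite /residue_avoid_count -[l.+1]addn1 iotaD count_cat /= addn0. Qed.

(* Avoiding residue 0, 1 or 2 realizes the bounds of count_no_three*. *)
Lemma residue_avoid_count0 l : residue_avoid_count 0 l = path_diss l.-1.
Proof. elim: l => [|l IH] //; rewrite residue_avoid_countS IH /path_diss; case: eqP; lia. Qed.

Lemma residue_avoid_count1 l :
  residue_avoid_count 1 l = path_diss l.-1 + (l %% 3 == 1).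
Proof.
elim: l => [|l IH] //; rewrite residue_avoid_countS IH /path_diss.
by case: l {IH} => [|l] //; case: eqP; case: eqP; lia.
Qed.

Lemma residue_avoid_count2 l : residue_avoid_count 2 l = path_diss l.
Proof. elim: l => [|l IH] //; rewrite residue_avoid_countS IH /path_diss; case: eqP; lia. Qed.

Lemma residue_in_three_in_row r i : r <= 2 ->
  [|| i %% 3 == r, i.+1 %% 3 == r | i.+2 %% 3 == r].
Proof. by move=> hr; apply/or3P; case: eqP; case: eqP; case: eqP; try lia; constructor. Qed.

(* Membership pattern along the extended leg v, q_0, q_1, ...: the root is in
   iff b, and q_k is in iff k mod 3 <> rw. *)
Definition residue_pattern (b : bool) (rw k : nat) : bool :=
  if k is k'.+1 then k' %% 3 != rw else b.

Lemma residue_pattern_sparse (b : bool) (rw k : nat) : rw <= 2 -> (b -> rw <= 1) ->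
  ~~ [&& residue_pattern b rw k, residue_pattern b rw k.+1 & residue_pattern b rw k.+2].
Proof.
move=> rw_le2 rw_le1; case: k => [|k] /=.
  by case: b rw_le1 => [/(_ isT)|_] //; case: rw {rw_le2} => [|[|]].
by case/or3P: (residue_in_three_in_row k rw_le2) => ->; rewrite ?andbF.
Qed.

(* The final comparison of the two bounds, with x = sum_w path_diss (l_w - 1),
   c1 = |C^1(v)| and c2 = |C^2(v)|. *)
Lemma root_in_all_arith x c1 c2 :
  x + c1 + c2 < 1 + x + (0 < c1) <-> c2 = 0 /\ c1 <= 1.
Proof. by case: (posnP c1) => [->|h]; rewrite ?h /=; split; lia. Qed.

Lemma root_in_none_arith x c1 c2 :
  1 + x + (0 < c1) < x + c1 + c2 <-> c2 = 2 \/ 3 <= c1 + c2.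
Proof. by case: (posnP c1) => [->|h]; rewrite ?h /=; split; lia. Qed.

Lemma max_diss_forced (T : finType) (e : rel T) (P : pred {set T}) (s_in s_out : nat) :
  (forall F, dissociation e F -> P F -> #|F| <= s_in) ->
  (forall F, dissociation e F -> ~~ P F -> #|F| <= s_out) ->
  (exists F, [/\ dissociation e F, P F & #|F| = s_in]) ->
  (exists F, [/\ dissociation e F, ~~ P F & #|F| = s_out]) ->
  (forall F, max_dissociation e F -> P F) <-> s_out < s_in.
Proof.
move=> ub_in ub_out [Fin [dFin PFin cFin]] [Fout [dFout PFout cFout]].
split=> [forced | lt_out_in F [dF maxF]].
- rewrite ltnNge; apply/negP => le_in_out.
  have maxFout : max_dissociation e Fout.
    split=> // F' dF'; rewrite cFout.
    by case: (boolP (P F')) => [/(ub_in _ dF') /leq_trans|/(ub_out _ dF')]; apply.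
  by move: PFout; rewrite forced.
- apply: contraTT lt_out_in => /(ub_out _ dF) le_F_out.
  by rewrite -leqNgt -cFin (leq_trans (maxF _ dFin)).
Qed.

Lemma cycle_mkseq (T : finType) (e : rel T) (g : nat -> T) n :
  (forall k, k < n -> e (g k) (g k.+1)) -> e (g n) (g 0) -> cycle e (mkseq g n.+1).
Proof.
move=> he hl; rewrite /mkseq /= rcons_path.
have hn i : i <= n -> nth (g 0) (g 0 :: map g (iota 1 n)) i = g i.
  by case: i => [|i] //= hi; rewrite (nth_map 0) ?size_iota // nth_iota.
apply/andP; split.
  apply/(pathP (g 0)) => i; rewrite size_map size_iota => hi.
  by rewrite hn ?(ltnW hi) // (nth_map 0) ?size_iota // nth_iota // he.
by rewrite (last_nth (g 0)) size_map size_iota hn.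
Qed.

Definition acyclic (T : finType) (e : rel T) : Prop :=
  ~ exists c : seq T, 3 <= size c /\ uniq c /\ cycle e c.

Lemma acyclic_no_closing_edge (T : finType) (e : rel T) (g : nat -> T) n :
  acyclic e -> 1 < n -> {in gtn n.+1 &, injective g} ->
  (forall k, k < n -> e (g k) (g k.+1)) -> ~~ e (g n) (g 0).
Proof.
move=> noc hn hinj he; apply/negP => hl; apply: noc; exists (mkseq g n.+1).
split; first by rewrite size_mkseq.
by split; [exact/mkseq_uniqP | exact: cycle_mkseq].
Qed.

Lemma deg2_nbr (T : finType) (e : rel T) z x x' y :
  deg e z <= 2 -> e z x -> e z x' -> x != x' -> e z y -> (y == x) || (y == x').
Proof.
move=> hdeg hx hx' hxx' hy; apply/negPn/negP; rewrite negb_or => /andP [hyx hyx'].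
have hsub : y |: (x |: [set x']) \subset nbhd e z.
  by apply/subsetP => u; rewrite !inE => /or3P [] /eqP ->.
have := leq_trans (subset_leq_card hsub) hdeg.
by rewrite !cardsU1 cards1 !inE negb_or hyx hyx' hxx'.
Qed.

Lemma card_sep_sum (T : finType) (B : {set T}) (P : pred T) :
  #|[set w in B | P w]| = \sum_(w in B) P w.
Proof.
rewrite -sum1_card big_mkcond /= [RHS]big_mkcond /=; apply: eq_bigr => u _.
by rewrite !inE; case: (u \in B); case: (P u).
Qed.

Lemma sum_mem_count (T : finType) (s : seq T) (P : pred T) : uniq s ->
  \sum_u ((u \in s) && P u) = count P s.
Proof.
move=> hu; rewrite -size_filter -(card_uniqP (filter_uniq P hu)) -sum1_card.
by rewrite [RHS]big_mkcond /=; apply: eq_bigr => u _; rewrite mem_filter andbC; case: (_ && _).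
Qed.

Lemma dissociationP (T : finType) (e : rel T) (F : {set T}) :
  dissociation e F <->
  (forall x y z, x \in F -> y \in F -> z \in F -> e x y -> e x z -> y = z).
Proof.
split=> [hF x y z hx hy hz hxy hxz | uniq_nbr x hx].
  by apply: (card_le1_eqP (hF x hx)); rewrite inE ?hy ?hz ?hxy ?hxz.
apply/card_le1_eqP => y z; rewrite !inE => /andP [hy hxy] /andP [hz hxz].
exact: uniq_nbr hx hz hy hxz hxy.
Qed.

Lemma nth_map_mem (T : finType) (F : {set T}) (s : seq T) (x0 : T) i :
  nth false (map (mem F) s) i = (i < size s) && (nth x0 s i \in F).
Proof. by case: ltnP => hi; [rewrite (nth_map x0) | rewrite nth_default ?size_map]. Qed.

Section Spider.
Variables (T : finType) (e : rel T) (v : T).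
Hypotheses (e_sym : symmetric e) (e_irr : irreflexive e)
  (e_conn : forall x y, connect e x y) (e_acyc : acyclic e)
  (deg_le2 : forall u, u != v -> deg e u <= 2).

Local Notation A := (avoid_rel e v).

Lemma avoid_sym : symmetric A.
Proof. by move=> x y; rewrite /avoid_rel /= e_sym [(x != v) && _]andbC. Qed.

(* w :: s is a simple path of T - v starting at w that cannot be extended
   at its end; the legs of the spider are of this form. *)
Definition leg (w : T) (s : seq T) : Prop :=
  [/\ path A w s, uniq (w :: s) & forall y, A (last w s) y -> y \in w :: s].

Lemma leg_exists w : exists s, leg w s.
Proof.
suff grow : forall s, path A w s -> uniq (w :: s) -> exists s', leg w s'.
  exact: (grow [::]).
move=> s; have [n] := ubnP (#|T| - size s); elim: n s => // n IH s hn hp hu.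
case: (pickP [pred y | A (last w s) y && (y \notin w :: s)]) => [y /andP [hy hny]|none].
  have hu' : uniq (w :: rcons s y) by rewrite -rcons_cons rcons_uniq hny.
  have hT : (size s).+2 <= #|T|.
    by have := max_card (mem (w :: rcons s y)); rewrite (card_uniqP hu') /= size_rcons.
  apply: (IH (rcons s y)) => //; first by rewrite size_rcons; lia.
  by rewrite rcons_path hp.
by exists s; split => // y hy; apply/negPn/negP => hny; have := none y; rewrite /= hy hny.
Qed.

Section Leg.
Variables (w : T) (s : seq T).
Hypotheses (v_w : e v w) (leg_ws : leg w s).
Local Notation q := (w :: s).
Local Notation a i := (nth v q i).

Lemma leg_uniq : uniq q. Proof. by case: leg_ws. Qed.

Lemma leg_avoid i : i.+1 < size q -> A (a i) (a i.+1).
Proof. by case: leg_ws => /(pathP v) hp _ _; apply: hp. Qed.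

Lemma leg_edge i : i.+1 < size q -> e (a i) (a i.+1).
Proof. by move/leg_avoid => /andP []. Qed.

Lemma leg_ne_root x : x \in q -> x != v.
Proof.
move=> hx; rewrite -(nth_index v hx); move: (index_mem x q); rewrite hx.
case: (index x q) => [_ /=|i /leg_avoid /and3P [] //].
by apply: contraTneq v_w => ->; rewrite e_irr.
Qed.

Lemma leg_nth_inj : {in gtn (size q) &, injective (fun i => a i)}.
Proof. by move=> i j hi hj /eqP; rewrite (nth_uniq v hi hj leg_uniq) => /eqP. Qed.

(* The leg is an induced path: acyclicity forbids chords. *)
Lemma leg_chordless i j : i < size q -> j < size q -> e (a i) (a j) ->
  (j == i.+1) || (i == j.+1).
Proof.
wlog hij : i j / i <= j.
  move=> H hi hj he; case: (leqP i j) => [/H|/ltnW /H]; first exact.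
  by move=> /(_ hj hi); rewrite e_sym orbC => /(_ he).
move=> hi hj he; case: (ltngtP j i.+1) => [ji|ij|] //.
  have ji_eq : j = i by lia.
  by move: he; rewrite ji_eq e_irr.
have no_edge : ~~ e (a (i + (j - i))) (a (i + 0)).
  apply: (acyclic_no_closing_edge (g := fun k => a (i + k)) e_acyc); first lia.
    move=> k k' hk hk' /leg_nth_inj; rewrite !inE /= in hj hk hk' *; lia.
  by move=> k hk; rewrite addnS; apply: leg_edge; lia.
by move: no_edge; rewrite addn0 subnKC // e_sym he.
Qed.

(* Only the first vertex of the leg is adjacent to v, again by acyclicity. *)
Lemma leg_root_adj j : j < size q -> e v (a j) -> j = 0.
Proof.
case: j => [//|j] hj he; exfalso.
have a_ne_v k : k <= size s -> a k != v by move=> hk; apply/leg_ne_root/mem_nth.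
pose g k := if k is k'.+1 then a k' else v.
have no_edge : ~~ e (g j.+2) (g 0).
  apply: (acyclic_no_closing_edge (g := g) e_acyc) => //.
    move=> [|k] [|k'] hk hk' //=; rewrite !inE /= in hj hk hk'.
    - by move=> va; have := a_ne_v k' ltac:(lia); rewrite -va eqxx.
    - by move=> av; have := a_ne_v k ltac:(lia); rewrite av eqxx.
    - by move/leg_nth_inj; rewrite !inE /= => ->; lia.
  by move=> [|k] hk //=; apply: leg_edge; rewrite /= in hj *; lia.
by move: no_edge; rewrite /= e_sym he.
Qed.

(* The leg is closed under adjacency in T - v: interior vertices already
   have their two neighbours on the leg, and the end is maximal. *)
Lemma leg_closed z y : z \in q -> A z y -> y \in q.
Proof.
move=> hz hzy; case: leg_ws => _ _ leg_end.
have [i hi z_eq] : exists2 i, i < size q & z = a i.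
  by exists (index z q); rewrite ?index_mem ?nth_index.
subst z.
have [i_last|hi'] : i = size s \/ i.+1 < size q by rewrite /= in hi *; lia.
  by apply: leg_end; rewrite (last_nth v) -i_last.
case/and3P: hzy => hzy /deg_le2 deg_z y_v.
case: i {hz} hi hi' hzy deg_z => [|i] hi hi' hzy deg_z.
  have v_ne_a1 : v != a 1 by rewrite eq_sym leg_ne_root // mem_nth.
  have a0_v : e (a 0) v by rewrite e_sym.
  case/orP: (deg2_nbr deg_z a0_v (leg_edge hi') v_ne_a1 hzy) => /eqP y_eq.
    by rewrite y_eq eqxx in y_v.
  by rewrite y_eq mem_nth.
have prev : e (a i.+1) (a i) by rewrite e_sym leg_edge.
have prev_ne_next : a i != a i.+2.
  by rewrite (nth_uniq v (ltnW hi) hi' leg_uniq) ltn_eqF.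
case/orP: (deg2_nbr deg_z prev (leg_edge hi') prev_ne_next hzy) => /eqP ->.
  exact: mem_nth (ltnW hi).
exact: mem_nth hi'.
Qed.

(* Hence the leg is exactly the component T_w of w in T - v. *)
Lemma leg_reach u : (u \in q) = connect A w u.
Proof.
apply/idP/idP => [hu|/connectP [p hp ->]].
  rewrite -(nth_index v hu); have : index u q < size q by rewrite index_mem.
  elim: (index u q) => [|i IH] hi; first exact: connect0.
  exact: connect_trans (IH (ltnW hi)) (connect1 (leg_avoid hi)).
have closed z p' : z \in q -> path A z p' -> last z p' \in q.
  elim: p' z => [|y p' IH] z //= hz /andP [hzy hp'].
  exact: IH (leg_closed hz hzy) hp'.
exact: closed (mem_head w s) hp.
Qed.

End Leg.

Section Legs.
Variable legs : T -> seq T.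
Hypothesis legsP : forall w, leg w (legs w).
Local Notation q w := (w :: legs w).
Local Notation C := (children_root e v).

Lemma legs_uniq w : uniq (q w).
Proof. exact: leg_uniq (legsP w). Qed.

(* Walking from v, one enters the legs only through their first vertex. *)
Lemma legs_cover u : u != v -> exists2 w, e v w & u \in q w.
Proof.
pose covered z := z = v \/ exists2 w, e v w & z \in q w.
have step z y : covered z -> e z y -> covered y.
  move=> hz hzy; case: (eqVneq y v) => [->|y_v]; [by left | right].
  case: hz => [z_v|[w hw hzw]]; first by exists y; rewrite ?mem_head // -z_v.
  exists w => //; apply: (leg_closed hw (legsP w) hzw).
  by rewrite /avoid_rel /= hzy y_v (leg_ne_root hw (legsP w) hzw).
have walk z p : covered z -> path e z p -> covered (last z p).
  by elim: p z => [|y p IH] z //= hz /andP [hzy hp]; exact: IH (step z y hz hzy) hp.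
move=> u_v; case/connectP: (e_conn v u) => p hp u_last.
case: (walk v p (or_introl erefl) hp); rewrite -u_last // => u_eq.
by rewrite u_eq eqxx in u_v.
Qed.

Lemma legs_disjoint w w' u : e v w -> e v w' -> u \in q w -> u \in q w' -> w = w'.
Proof.
move=> hw hw' hu hu'.
have w_u : connect A w u by rewrite -(leg_reach hw (legsP w)).
have w'_u : connect A w' u by rewrite -(leg_reach hw' (legsP w')).
have : connect A w w' by rewrite (connect_trans w_u) // (sym_connect_sym avoid_sym).
rewrite -(leg_reach hw (legsP w)) => w'_in.
have idx0 : index w' (q w) = 0.
  by apply: (leg_root_adj hw (legsP w)); rewrite ?index_mem ?nth_index.
by rewrite -(nth_index v w'_in) idx0.
Qed.

Lemma leg_nbr w x y : e v w -> x \in q w -> e x y -> y = v \/ y \in q w.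
Proof.
move=> hw hx hxy; case: (eqVneq y v) => [->|y_v]; [by left | right].
apply: (leg_closed hw (legsP w) hx).
by rewrite /avoid_rel /= hxy y_v (leg_ne_root hw (legsP w) hx).
Qed.

Lemma card_subtree w : e v w -> #|subtree_root_child e v w| = size (q w).
Proof.
move=> hw; rewrite -(card_uniqP (legs_uniq w)); apply: eq_card => u.
by rewrite inE (leg_reach hw (legsP w)).
Qed.

Lemma card_Ci i : #|Ci e v i| = \sum_(w in C) (size (q w) %% 3 == i).
Proof.
rewrite card_sep_sum; apply: eq_bigr => w; rewrite inE => hw.
by rewrite card_subtree.
Qed.

Lemma card_split (F : {set T}) : #|F| = (v \in F) + \sum_(w in C) count (mem F) (q w).
Proof.
rewrite -sum1_card big_mkcond (bigD1 v) //; congr (_ + _).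
have on_legs u : u != v -> (u \in F : nat) = \sum_(w in C) ((u \in q w) && (u \in F)).
  move=> u_v; have [w0 hw0 hu0] := legs_cover u_v.
  rewrite (bigD1 w0) /=; last by rewrite inE.
  rewrite hu0 big1 ?addn0 // => w /andP [hw w_w0].
  case: (boolP (u \in q w)) => // huw; rewrite inE in hw.
  by rewrite (legs_disjoint hw0 hw hu0 huw) eqxx in w_w0.
rewrite (eq_bigr _ on_legs) exchange_big; apply: eq_bigr => w hw; rewrite inE in hw.
rewrite -(sum_mem_count _ (legs_uniq w)) [RHS](bigD1 v) //=.
have v_out : v \notin q w by apply/negP => /(leg_ne_root hw (legsP w)); rewrite eqxx.
by rewrite (negbTE v_out).
Qed.

Lemma diss_leg_no_three F w : dissociation e F -> e v w ->
  no_three_in_row (map (mem F) (q w)).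
Proof.
move=> /dissociationP hF hw i; rewrite !(nth_map_mem _ _ v).
apply/negP => /and3P [/andP [hi0 h0] /andP [hi1 h1] /andP [hi2 h2]].
have prev : e (nth v (q w) i.+1) (nth v (q w) i) by rewrite e_sym (leg_edge (legsP w) hi1).
move/eqP: (hF _ _ _ h1 h0 h2 prev (leg_edge (legsP w) hi2)).
by rewrite (nth_uniq v hi0 hi2 (legs_uniq w)) ltn_eqF.
Qed.

Lemma diss_root_child_next F w : dissociation e F -> e v w -> v \in F -> w \in F ->
  ~~ nth false (map (mem F) (q w)) 1.
Proof.
move=> /dissociationP hF hw hv hwF; rewrite (nth_map_mem _ _ v); apply/andP => -[hi h1].
have w_v : e w v by rewrite e_sym.
have v_eq := hF _ _ _ hwF hv h1 w_v (leg_edge (legsP w) hi).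
by have := leg_ne_root hw (legsP w) (mem_nth v hi); rewrite -v_eq eqxx.
Qed.

Definition max_without_root : nat := \sum_(w in C) path_diss (size (q w)).

Definition leg_base : nat := \sum_(w in C) path_diss (size (q w)).-1.

Definition max_with_root : nat := 1 + leg_base + (0 < #|Ci e v 1|).

Lemma max_without_root_split : max_without_root = leg_base + #|Ci e v 1| + #|Ci e v 2|.
Proof.
rewrite /max_without_root /leg_base !card_Ci -!big_split; apply: eq_bigr => w _.
exact: path_diss_rec.
Qed.

Lemma count_leg_map (F : {set T}) w :
  count (mem F) (q w) = count id (map (mem F) (q w)).
Proof. by rewrite count_map. Qed.

Lemma bound_without_root F : dissociation e F -> v \notin F -> #|F| <= max_without_root.
Proof.
move=> hF hv; rewrite card_split (negbTE hv) add0n; apply: leq_sum => w; rewrite inE => hw.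
by rewrite count_leg_map -(size_map (mem F)); apply/count_no_three/diss_leg_no_three.
Qed.

(* With v in F: at most one child of v is in F, and only a child in C^1(v)
   gains over the bound path_diss (l_w - 1) for its leg. *)
Lemma bound_with_root F : dissociation e F -> v \in F -> #|F| <= max_with_root.
Proof.
move=> hF hv; rewrite card_split hv /max_with_root /leg_base -addnA leq_add2l.
pose extra w := (w \in F) && (size (q w) %% 3 == 1).
have leg_bound w : w \in C -> count (mem F) (q w) <= path_diss (size (q w)).-1 + extra w.
  rewrite inE => hw; have no3 := diss_leg_no_three hF hw.
  rewrite count_leg_map /extra -(size_map (mem F) (q w)).
  case: (boolP (w \in F)) => wF; rewrite ?andTb ?andFb.
    exact: count_no_three_head_pair no3 wF (diss_root_child_next hF hw hv wF).
  by rewrite addn0; apply: count_no_three_head_out no3 _.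
apply: leq_trans (leq_sum _ leg_bound) _; rewrite big_split leq_add2l.
have extra_le1 : \sum_(w in C) extra w <= 1.
  apply: (@leq_trans (\sum_(w in C) (w \in F))).
    by apply: leq_sum => w _; rewrite /extra; case: (w \in F); rewrite ?leq_b1.
  rewrite -card_sep_sum; apply: leq_trans _ (hF v hv); apply: subset_leq_card.
  by apply/subsetP => x; rewrite !inE andbC.
have extra_le_c1 : \sum_(w in C) extra w <= #|Ci e v 1|.
  by rewrite card_Ci; apply: leq_sum => w _; rewrite /extra; case: (w \in F).
by case: posnP extra_le_c1 => [-> | _].
Qed.

Definition residue_set (b : bool) (r : T -> nat) : {set T} :=
  [set u | if u == v then b
           else [exists w, [&& e v w, u \in q w & index u (q w) %% 3 != r w]]].

Lemma residue_set_root b r : (v \in residue_set b r) = b.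
Proof. by rewrite inE eqxx. Qed.

Lemma residue_set_leg b r w u : e v w -> u \in q w ->
  (u \in residue_set b r) = (index u (q w) %% 3 != r w).
Proof.
move=> hw hu; rewrite inE (negbTE (leg_ne_root hw (legsP w) hu)).
apply/existsP/idP => [[w' /and3P [hw' hu' res]] | res]; last by exists w; rewrite hw hu res.
by rewrite (legs_disjoint hw hw' hu hu').
Qed.

Lemma index_ext w u : e v w -> u \in q w -> index u (v :: q w) = (index u (q w)).+1.
Proof. by move=> hw hu; rewrite /= eq_sym (negbTE (leg_ne_root hw (legsP w) hu)). Qed.

Lemma residue_set_ext b r w u : e v w -> u \in v :: q w ->
  (u \in residue_set b r) = residue_pattern b (r w) (index u (v :: q w)).
Proof.
move=> hw; rewrite inE => /predU1P [->|hu]; first by rewrite residue_set_root index_head.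
by rewrite (index_ext hw hu) (residue_set_leg _ _ hw hu).
Qed.

Lemma card_residue_set b r :
  #|residue_set b r| = b + \sum_(w in C) residue_avoid_count (r w) (size (q w)).
Proof.
rewrite card_split residue_set_root; congr (_ + _); apply: eq_bigr => w; rewrite inE => hw.
rewrite -[in LHS](mkseq_nth v (q w)) /mkseq count_map; apply: eq_in_count => i.
rewrite mem_iota add0n => /andP [_ hi] /=.
by rewrite (residue_set_leg _ _ hw (mem_nth v hi)) index_uniq ?legs_uniq.
Qed.

Lemma leg_nbr_ext w x y : e v w -> x \in q w -> e x y ->
  y \in v :: q w /\
  (index y (v :: q w) == (index x (v :: q w)).+1) ||
  (index x (v :: q w) == (index y (v :: q w)).+1).
Proof.
move=> hw hx hxy; rewrite (index_ext hw hx).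
case: (leg_nbr hw hx hxy) => [y_v|hy]; subst.
  split; first exact: mem_head.
  have x_nth : e v (nth v (q w) (index x (q w))) by rewrite nth_index // e_sym.
  by rewrite index_head (leg_root_adj hw (legsP w) _ x_nth) // index_mem.
split; first by rewrite inE hy orbT.
rewrite (index_ext hw hy) !eqSS; apply: (leg_chordless hw (legsP w)); rewrite ?index_mem //.
by rewrite !nth_index.
Qed.

Lemma residue_set_diss (b : bool) (r : T -> nat) :
  (forall w, r w <= 2) -> (b -> forall w, r w <= 1) ->
  (b -> forall w w', e v w -> e v w' -> r w = 1 -> r w' = 1 -> w = w') ->
  dissociation e (residue_set b r).
Proof.
move=> r_le2 r_le1 r_one; apply/dissociationP => x y z hx hy hz hxy hxz.
have [x_v|x_v] := eqVneq x v.
  subst x; rewrite residue_set_root in hx.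
  have child_one u : u \in residue_set b r -> e v u -> r u = 1.
    move=> hu hvu; move: hu (r_le1 hx u).
    by rewrite (residue_set_leg _ _ hvu (mem_head _ _)) index_head; case: (r u) => [|[|]].
  exact: r_one hx _ _ hxy hxz (child_one _ hy hxy) (child_one _ hz hxz).
have [w hw hxw] := legs_cover x_v.
have [hyE hyj] := leg_nbr_ext hw hxw hxy.
have [hzE hzj] := leg_nbr_ext hw hxw hxz.
have hxE : x \in v :: q w by rewrite inE hxw orbT.
rewrite (residue_set_ext _ _ hw hxE) in hx.
rewrite (residue_set_ext _ _ hw hyE) in hy.
rewrite (residue_set_ext _ _ hw hzE) in hz.
have [iy_iz|iy_iz] := eqVneq (index y (v :: q w)) (index z (v :: q w)).
  by rewrite -(nth_index v hyE) -(nth_index v hzE) iy_iz.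
have sparse k := residue_pattern_sparse k (r_le2 w) (r_le1^~ w).
case/orP: hyj => /eqP iy; case/orP: hzj => /eqP iz.
- by rewrite iy iz eqxx in iy_iz.
- by have := sparse (index z (v :: q w)); rewrite hz -iz hx -iy hy.
- by have := sparse (index y (v :: q w)); rewrite hy -iy hx -iz hz.
- by move: iy_iz; rewrite -eqSS -iy -iz eqxx.
Qed.

Lemma attain_without_root : exists F, [/\ dissociation e F, v \notin F & #|F| = max_without_root].
Proof.
exists (residue_set false (fun=> 2)); split.
- exact: residue_set_diss.
- by rewrite residue_set_root.
- by rewrite card_residue_set; apply: eq_bigr => w _; rewrite residue_avoid_count2.
Qed.

Lemma attain_with_root : exists F, [/\ dissociation e F, v \in F & #|F| = max_with_root].
Proof.
rewrite /max_with_root /leg_base; case: (posnP #|Ci e v 1|) => [_|/card_gt0P [p hp]].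
  exists (residue_set true (fun=> 0)); split.
  - exact: residue_set_diss.
  - by rewrite residue_set_root.
  - rewrite card_residue_set addn0; congr (_ + _).
    by apply: eq_bigr => w _; rewrite residue_avoid_count0.
move: hp; rewrite !inE => /andP [vp p_res]; rewrite card_subtree // in p_res.
exists (residue_set true (fun w => (w == p) : nat)); split.
- apply: residue_set_diss => [w|_ w|_ w w' _ _]; first by case: (w == p).
    exact: leq_b1.
  by case: eqP => // -> _; case: eqP.
- by rewrite residue_set_root.
- rewrite card_residue_set -addnA; congr (_ + _).
  rewrite (eq_bigr (fun w => path_diss (size (q w)).-1 + (w == p))); last first.
    move=> w _; case: eqP => [->|_]; last by rewrite residue_avoid_count0 addn0.
    by rewrite residue_avoid_count1 p_res.
  rewrite big_split; congr (_ + _).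
  by rewrite (bigD1 p) ?inE // eqxx big1 // => w /andP [_ /negbTE ->].
Qed.

Lemma spider_root_status :
  (in_all_max_diss e v <-> (#|Ci e v 2| = 0 /\ #|Ci e v 1| <= 1)) /\
  (in_no_max_diss e v <-> (#|Ci e v 2| = 2 \/ 3 <= #|Ci e v 1| + #|Ci e v 2|)).
Proof.
split.
- apply: (iff_trans _ (root_in_all_arith leg_base _ _)); rewrite -max_without_root_split.
  apply: (max_diss_forced (P := fun F => v \in F)).
  + exact: bound_with_root.
  + exact: bound_without_root.
  + exact: attain_with_root.
  + exact: attain_without_root.
- apply: (iff_trans _ (root_in_none_arith leg_base _ _)); rewrite -max_without_root_split.
  apply: (max_diss_forced (P := fun F => v \notin F)).
  + exact: bound_without_root.
  + by move=> F hF /negPn; exact: bound_with_root.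
  + exact: attain_without_root.
  + by have [F [hF hv cF]] := attain_with_root; exists F; rewrite negbK.
Qed.

End Legs.
End Spider.

Theorem theorem2p1 (T : finType) (e : rel T) (v : T) :
  is_tree e ->
  (forall u : T, u != v -> deg e u <= 2) ->
  (in_all_max_diss e v <-> (#|Ci e v 2| = 0 /\ #|Ci e v 1| <= 1)) /\
  (in_no_max_diss e v <-> (#|Ci e v 2| = 2 \/ 3 <= #|Ci e v 1| + #|Ci e v 2|)).
Proof.
move=> [[e_sym e_irr] [e_conn e_acyc]] deg_le2.
have [legs legsP] : exists legs : T -> seq T, forall w, leg e v w (legs w).
  by apply: fin_all_exists => w; exact: leg_exists.
exact: (spider_root_status e_sym e_irr e_conn e_acyc deg_le2 legsP).
Qed.
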